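(* Let $S$ be a Stone relation algebra that is atomic, atom-rectangular and simple, and has finitely many atoms. Then $S$ is a relation algebra, that is, $\overline{\overline{x}}=x$ for all $x\in S$.
   Context: A Stone relation algebra is a structure $(S,\sqcup,\sqcap,\cdot,\overline{\,\cdot\,},{}^{\smile},\bot,\top,1)$ (write $xy$ for $x\cdot y$, $\overline{x}$ for the pseudocomplement, $x^{\smile}$ for the converse) such that: $(S,\sqcup,\sqcap,\bot,\top)$ is a bounded distributive lattice with order $x\sqsubseteq y\iff x\sqcup y=y$; $x\sqcap y=\bot\iff x\sqsubseteq\overline{y}$; $\overline{x}\sqcup\overline{\overline{x}}=\top$; $\cdot$ is associative with two-sided unit $1$, distributes over $\sqcup$ on both sides, and $\bot$ is a zero of $\cdot$; $x^{\smile\smile}=x$, $(xy)^{\smile}=y^{\smile}x^{\smile}$, $(x\sqcup y)^{\smile}=x^{\smile}\sqcup y^{\smile}$; $\overline{\overline{1}}=1$; $\overline{\overline{xy}}=\overline{\overline{x}}\,\overline{\overline{y}}$; $xy\sqcap z\sqsubseteq x(y\sqcap x^{\smile}z)$. A relation algebra is a Stone relation algebra with $\overline{\overline{x}}=x$ for all $x$. An atom is an element $x\neq\bot$ such that $\bot\neq y\sqsubseteq x$ implies $y=x$. An element $x$ is a rectangle if $x\top x\sqsubseteq x$ and simple if $\top x\top=\top$. $S$ is simple if every element other than $\bot$ is simple; atomic if every $x\neq\bot$ has an atom below it; atom-rectangular if every atom is a rectangle. *)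

From Stdlib Require Import List.

Record StoneRA := {
  car :> Type;
  sup : car -> car -> car;
  inf : car -> car -> car;
  comp : car -> car -> car;
  pc : car -> car;
  conv : car -> car;
  bot : car;
  top : car;
  one : car;
  sup_assoc : forall x y z, sup x (sup y z) = sup (sup x y) z;
  sup_comm : forall x y, sup x y = sup y x;
  sup_idem : forall x, sup x x = x;
  inf_assoc : forall x y z, inf x (inf y z) = inf (inf x y) z;
  inf_comm : forall x y, inf x y = inf y x;
  inf_idem : forall x, inf x x = x;
  sup_absorb : forall x y, sup x (inf x y) = x;
  inf_absorb : forall x y, inf x (sup x y) = x;
  inf_sup_distr : forall x y z, inf x (sup y z) = sup (inf x y) (inf x z);
  sup_bot : forall x, sup x bot = x;
  inf_top : forall x, inf x top = x;
  (* pseudocomplement; order x ⊑ y := x ⊔ y = y *)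
  pc_spec : forall x y, inf x y = bot <-> sup x (pc y) = pc y;
  stone : forall x, sup (pc x) (pc (pc x)) = top;
  comp_assoc : forall x y z, comp x (comp y z) = comp (comp x y) z;
  comp_one_l : forall x, comp one x = x;
  comp_one_r : forall x, comp x one = x;
  comp_sup_l : forall x y z, comp (sup x y) z = sup (comp x z) (comp y z);
  comp_sup_r : forall x y z, comp x (sup y z) = sup (comp x y) (comp x z);
  comp_bot_l : forall x, comp bot x = bot;
  comp_bot_r : forall x, comp x bot = bot;
  conv_invol : forall x, conv (conv x) = x;
  conv_comp : forall x y, conv (comp x y) = comp (conv y) (conv x);
  conv_sup : forall x y, conv (sup x y) = sup (conv x) (conv y);
  pp_one : pc (pc one) = one;
  pp_comp : forall x y, pc (pc (comp x y)) = comp (pc (pc x)) (pc (pc y));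
  dedekind : forall x y z,
    sup (inf (comp x y) z) (comp x (inf y (comp (conv x) z)))
    = comp x (inf y (comp (conv x) z))
}.

Section Defs.
Variable S : StoneRA.

Definition le (x y : S) : Prop := sup S x y = y.

Definition atom (x : S) : Prop :=
  x <> bot S /\ forall y : S, y <> bot S -> le y x -> y = x.

Definition rectangle (x : S) : Prop :=
  le (comp S (comp S x (top S)) x) x.

Definition simple_elt (x : S) : Prop :=
  comp S (comp S (top S) x) (top S) = top S.

Definition simple_alg : Prop := forall x : S, x <> bot S -> simple_elt x.

Definition atomic : Prop :=
  forall x : S, x <> bot S -> exists a, atom a /\ le a x.

Definition atom_rectangular : Prop := forall a : S, atom a -> rectangle a.

Definition finitely_many_atoms : Prop :=
  exists l : list S, forall a : S, atom a -> In a l.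

End Defs.

(** Every atom [a] is regular. Dedekind's law yields atoms [b ⊑ a⋅a˘ ⊓ 1] and
    [c ⊑ a˘⋅a ⊓ 1] with [b⋅a ≠ ⊥ ≠ a⋅c]; their regularisations [p = ¬¬b] and
    [q = ¬¬c] are rectangles with [p⋅a = a = a⋅q], so simplicity of [a] gives
    [¬¬a = p⋅¬¬a⋅q ⊑ p⋅⊤⋅q = p⋅⊤⋅a⋅⊤⋅q ⊑ a]. Regular atoms are complemented, so
    when there are finitely many atoms an element lies below [w] as soon as all
    atoms below it do. Every atom lies below [x] or below [¬x]; hence
    [x ⊔ ¬x = ⊤], and [x] is regular. *)

From Stdlib Require Import List Classical.

Section StoneRelationAlgebra.

Context {S : StoneRA}.

Local Notation "⊥" := (bot S).
Local Notation "⊤" := (top S).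
Local Notation "x ⊑ y" := (le S x y) (at level 70).
Local Notation "x ⊔ y" := (sup S x y) (at level 50, left associativity).
Local Notation "x ⊓ y" := (inf S x y) (at level 40, left associativity).
Local Notation "x ⋅ y" := (comp S x y) (at level 31, left associativity).
Local Notation "x ˘" := (conv S x) (at level 2, left associativity, format "x ˘").
Local Notation "¬ x" := (pc S x) (at level 30, right associativity).

Definition regular (x : S) : Prop := ¬ ¬ x = x.

Lemma le_refl (x : S) : x ⊑ x.
Proof. apply sup_idem. Qed.

Lemma le_trans (x y z : S) : x ⊑ y -> y ⊑ z -> x ⊑ z.
Proof. unfold le; intros Hxy Hyz. now rewrite <- Hyz, sup_assoc, Hxy. Qed.

Lemma le_antisym (x y : S) : x ⊑ y -> y ⊑ x -> x = y.
Proof. unfold le; intros Hxy Hyx. now rewrite <- Hyx, sup_comm. Qed.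

Lemma le_sup_l (x y : S) : x ⊑ x ⊔ y.
Proof. unfold le. now rewrite sup_assoc, sup_idem. Qed.

Lemma le_sup_r (x y : S) : y ⊑ x ⊔ y.
Proof. rewrite sup_comm. apply le_sup_l. Qed.

Lemma sup_le (x y z : S) : x ⊑ z -> y ⊑ z -> x ⊔ y ⊑ z.
Proof. unfold le; intros Hxz Hyz. now rewrite <- sup_assoc, Hyz, Hxz. Qed.

Lemma le_iff_inf (x y : S) : x ⊑ y <-> x ⊓ y = x.
Proof.
  unfold le; split; intro H.
  - rewrite <- H. apply inf_absorb.
  - now rewrite <- H, sup_comm, inf_comm, sup_absorb.
Qed.

Lemma inf_le_l (x y : S) : x ⊓ y ⊑ x.
Proof. apply le_iff_inf. now rewrite (inf_comm _ (x ⊓ y)), inf_assoc, inf_idem. Qed.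

Lemma inf_le_r (x y : S) : x ⊓ y ⊑ y.
Proof. rewrite inf_comm. apply inf_le_l. Qed.

Lemma le_inf (x y z : S) : z ⊑ x -> z ⊑ y -> z ⊑ x ⊓ y.
Proof. rewrite !le_iff_inf; intros Hx Hy. now rewrite inf_assoc, Hx, Hy. Qed.

Lemma inf_mono (x y x' y' : S) : x ⊑ x' -> y ⊑ y' -> x ⊓ y ⊑ x' ⊓ y'.
Proof.
  intros Hx Hy. apply le_inf.
  - exact (le_trans _ _ _ (inf_le_l x y) Hx).
  - exact (le_trans _ _ _ (inf_le_r x y) Hy).
Qed.

Lemma bot_le (x : S) : ⊥ ⊑ x.
Proof. unfold le. now rewrite sup_comm, sup_bot. Qed.

Lemma le_top (x : S) : x ⊑ ⊤.
Proof. apply le_iff_inf, inf_top. Qed.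

Lemma le_bot (x : S) : x ⊑ ⊥ -> x = ⊥.
Proof. intro H. exact (le_antisym _ _ H (bot_le x)). Qed.

Lemma comp_mono_l (x y z : S) : x ⊑ y -> x ⋅ z ⊑ y ⋅ z.
Proof. unfold le; intro H. now rewrite <- comp_sup_l, H. Qed.

Lemma comp_mono_r (x y z : S) : x ⊑ y -> z ⋅ x ⊑ z ⋅ y.
Proof. unfold le; intro H. now rewrite <- comp_sup_r, H. Qed.

Lemma conv_mono (x y : S) : x ⊑ y -> x˘ ⊑ y˘.
Proof. unfold le; intro H. now rewrite <- conv_sup, H. Qed.

Lemma conv_inf_le (x y : S) : (x ⊓ y)˘ ⊑ x˘ ⊓ y˘.
Proof. apply le_inf; apply conv_mono; [apply inf_le_l | apply inf_le_r]. Qed.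

Lemma le_pc (x y : S) : x ⊓ y = ⊥ -> x ⊑ ¬ y.
Proof. apply pc_spec. Qed.

Lemma inf_pc (x : S) : x ⊓ ¬ x = ⊥.
Proof. rewrite inf_comm. apply pc_spec, le_refl. Qed.

Lemma pc_anti (x y : S) : x ⊑ y -> ¬ y ⊑ ¬ x.
Proof.
  intro Hxy. apply le_pc, le_bot.
  rewrite <- (inf_pc y), (inf_comm _ y).
  exact (inf_mono _ _ _ _ (le_refl _) Hxy).
Qed.

Lemma le_pp (x : S) : x ⊑ ¬ ¬ x.
Proof. apply le_pc, inf_pc. Qed.

Lemma pp_mono (x y : S) : x ⊑ y -> ¬ ¬ x ⊑ ¬ ¬ y.
Proof. intro Hxy. now do 2 apply pc_anti. Qed.

Lemma pp_subid_le_one (x : S) : x ⊑ one S -> ¬ ¬ x ⊑ one S.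
Proof. intro Hx. rewrite <- (pp_one S). now apply pp_mono. Qed.

Lemma regular_pp (x : S) : regular (¬ ¬ x).
Proof. apply le_antisym; [apply pc_anti, le_pp | apply le_pp]. Qed.

Lemma pp_top : ¬ ¬ ⊤ = ⊤.
Proof. exact (le_antisym _ _ (le_top _) (le_pp _)). Qed.

Lemma regular_of_complemented (x : S) : x ⊔ ¬ x = ⊤ -> regular x.
Proof.
  intro Hcompl. apply le_antisym; [|apply le_pp].
  rewrite <- (inf_top S (¬ ¬ x)), <- Hcompl, inf_sup_distr, (inf_comm _ _ (¬ x)),
    inf_pc, sup_bot.
  apply inf_le_r.
Qed.

Lemma complemented_of_regular (x : S) : regular x -> x ⊔ ¬ x = ⊤.
Proof. unfold regular; intro Hx. now rewrite <- Hx at 1; rewrite sup_comm, stone. Qed.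

Lemma dedekind_l (x y z : S) : x ⋅ y ⊓ z ⊑ x ⋅ (y ⊓ x˘ ⋅ z).
Proof. apply dedekind. Qed.

Lemma dedekind_r (x y z : S) : x ⋅ y ⊓ z ⊑ (x ⊓ z ⋅ y˘) ⋅ y.
Proof.
  assert (Hconv : (x ⋅ y ⊓ z)˘ ⊑ y˘ ⋅ (x˘ ⊓ y˘˘ ⋅ z˘)).
  { apply (le_trans _ (y˘ ⋅ x˘ ⊓ z˘)).
    - rewrite <- conv_comp. apply conv_inf_le.
    - apply dedekind_l. }
  apply conv_mono in Hconv.
  rewrite conv_invol, conv_comp, conv_invol in Hconv.
  apply (le_trans _ _ _ Hconv), comp_mono_l.
  apply (le_trans _ _ _ (conv_inf_le _ _)).
  rewrite conv_invol, conv_comp, !conv_invol. apply le_refl.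
Qed.

Lemma le_subid_comp_l (x : S) : x ⊑ (x ⋅ x˘ ⊓ one S) ⋅ x.
Proof.
  rewrite <- (inf_idem S x) at 1. rewrite <- (comp_one_l S x) at 1.
  rewrite (inf_comm _ (x ⋅ x˘)). apply dedekind_r.
Qed.

Lemma le_subid_comp_r (x : S) : x ⊑ x ⋅ (x˘ ⋅ x ⊓ one S).
Proof.
  rewrite <- (inf_idem S x) at 1. rewrite <- (comp_one_r S x) at 1.
  rewrite (inf_comm _ (x˘ ⋅ x)). apply dedekind_l.
Qed.

Lemma le_comp_conv_r (x y : S) : y ⊑ x ⋅ x˘ -> y ⊑ y ⋅ x ⋅ x˘.
Proof.
  intro Hy. apply le_iff_inf in Hy. rewrite inf_comm in Hy. rewrite <- Hy at 1.
  apply (le_trans _ _ _ (dedekind_r _ _ _)), comp_mono_l.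
  rewrite conv_invol. apply inf_le_r.
Qed.

Lemma le_conv_comp_l (x y : S) : y ⊑ x˘ ⋅ x -> y ⊑ x˘ ⋅ (x ⋅ y).
Proof.
  intro Hy. apply le_iff_inf in Hy. rewrite inf_comm in Hy. rewrite <- Hy at 1.
  apply (le_trans _ _ _ (dedekind_l _ _ _)), comp_mono_r.
  rewrite conv_invol. apply inf_le_r.
Qed.

Lemma atom_neq_bot (a : S) : atom S a -> a <> ⊥.
Proof. now intros [Ha _]. Qed.

Lemma atom_le_eq (a y : S) : atom S a -> y <> ⊥ -> y ⊑ a -> y = a.
Proof. intros [_ Ha] Hy Hya. exact (Ha y Hy Hya). Qed.

Lemma atom_le_or_disjoint (a z : S) : atom S a -> a ⊑ z \/ a ⊓ z = ⊥.
Proof.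
  intro Ha. destruct (classic (a ⊓ z = ⊥)) as [Hdisj|Hmeet]; [now right|left].
  rewrite <- (atom_le_eq a (a ⊓ z) Ha Hmeet (inf_le_l _ _)). apply inf_le_r.
Qed.

Lemma rectangle_pp (x : S) : rectangle S x -> rectangle S (¬ ¬ x).
Proof.
  unfold rectangle. intro Hx. rewrite <- pp_top at 1. rewrite <- !pp_comp.
  now apply pp_mono.
Qed.

Lemma rectangle_comp_top_l (p a : S) : rectangle S p -> p ⋅ a = a -> p ⋅ ⊤ ⋅ a ⊑ a.
Proof.
  intros Hp Hpa. rewrite <- Hpa at 1. rewrite comp_assoc. rewrite <- Hpa at 2.
  now apply comp_mono_l.
Qed.

Lemma rectangle_comp_top_r (q a : S) : rectangle S q -> a ⋅ q = a -> a ⋅ ⊤ ⋅ q ⊑ a.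
Proof.
  intros Hq Haq. rewrite <- Haq at 1. rewrite <- !comp_assoc. rewrite <- Haq at 2.
  apply comp_mono_r. now rewrite comp_assoc.
Qed.

Lemma regular_of_rectangle_units (p q a : S) :
  simple_elt S a -> regular p -> regular q -> rectangle S p -> rectangle S q ->
  p ⋅ a = a -> a ⋅ q = a -> regular a.
Proof.
  unfold regular; intros Ha Hp_reg Hq_reg Hp Hq Hpa Haq.
  apply le_antisym; [|apply le_pp].
  assert (Hsandwich : ¬ ¬ a = p ⋅ ¬ ¬ a ⋅ q).
  { rewrite <- Hpa at 1. rewrite <- Haq at 1.
    now rewrite comp_assoc, !pp_comp, Hp_reg, Hq_reg. }
  rewrite Hsandwich.
  apply (le_trans _ (p ⋅ ⊤ ⋅ q)); [apply comp_mono_l, comp_mono_r, le_top|].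
  unfold simple_elt in Ha. rewrite <- Ha, !comp_assoc.
  apply (le_trans _ (a ⋅ ⊤ ⋅ q)); [|now apply rectangle_comp_top_r].
  do 2 apply comp_mono_l. now apply rectangle_comp_top_l.
Qed.

Section Atomic.

Hypothesis atomicS : atomic S.
Hypothesis rectangularS : atom_rectangular S.

Lemma atom_left_unit (a : S) :
  atom S a -> exists p, regular p /\ rectangle S p /\ p ⋅ a = a.
Proof.
  intro Ha.
  assert (Hsubid : a ⋅ a˘ ⊓ one S <> ⊥).
  { intro E. apply (atom_neq_bot a Ha), le_bot.
    rewrite <- (comp_bot_l S a), <- E. apply le_subid_comp_l. }
  destruct (atomicS _ Hsubid) as [b [Hb Hb_le]].
  exists (¬ ¬ b). split; [apply regular_pp|]. split; [now apply rectangle_pp, rectangularS|].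
  apply atom_le_eq; [exact Ha| |].
  - intro E. apply (atom_neq_bot b Hb), le_bot.
    assert (Hba : b ⋅ a = ⊥).
    { apply le_bot. rewrite <- E. apply comp_mono_l, le_pp. }
    rewrite <- (comp_bot_l S a˘), <- Hba.
    apply le_comp_conv_r. exact (le_trans _ _ _ Hb_le (inf_le_l _ _)).
  - rewrite <- (comp_one_l S a) at 2. apply comp_mono_l, pp_subid_le_one.
    exact (le_trans _ _ _ Hb_le (inf_le_r _ _)).
Qed.

Lemma atom_right_unit (a : S) :
  atom S a -> exists q, regular q /\ rectangle S q /\ a ⋅ q = a.
Proof.
  intro Ha.
  assert (Hsubid : a˘ ⋅ a ⊓ one S <> ⊥).
  { intro E. apply (atom_neq_bot a Ha), le_bot.
    rewrite <- (comp_bot_r S a), <- E. apply le_subid_comp_r. }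
  destruct (atomicS _ Hsubid) as [c [Hc Hc_le]].
  exists (¬ ¬ c). split; [apply regular_pp|]. split; [now apply rectangle_pp, rectangularS|].
  apply atom_le_eq; [exact Ha| |].
  - intro E. apply (atom_neq_bot c Hc), le_bot.
    assert (Hac : a ⋅ c = ⊥).
    { apply le_bot. rewrite <- E. apply comp_mono_r, le_pp. }
    rewrite <- (comp_bot_r S a˘), <- Hac.
    apply le_conv_comp_l. exact (le_trans _ _ _ Hc_le (inf_le_l _ _)).
  - rewrite <- (comp_one_r S a) at 2. apply comp_mono_r, pp_subid_le_one.
    exact (le_trans _ _ _ Hc_le (inf_le_r _ _)).
Qed.

Lemma atom_regular (a : S) : simple_alg S -> atom S a -> regular a.
Proof.
  intros Hsimple Ha.
  destruct (atom_left_unit a Ha) as [p [Hp_reg [Hp Hpa]]].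
  destruct (atom_right_unit a Ha) as [q [Hq_reg [Hq Haq]]].
  exact (regular_of_rectangle_units p q a
           (Hsimple a (atom_neq_bot a Ha)) Hp_reg Hq_reg Hp Hq Hpa Haq).
Qed.

(* Induction on the list of candidate atoms: a complemented atom [a] splits
   [z] as [z ⊓ a ⊔ z ⊓ ¬a], and no atom below [z ⊓ ¬a] equals [a]. *)
Lemma le_of_atoms_le (l : list S) :
  (forall a, atom S a -> regular a) ->
  forall z w, (forall b, atom S b -> b ⊑ z -> In b l) ->
  (forall b, atom S b -> b ⊑ z -> b ⊑ w) -> z ⊑ w.
Proof.
  intro Hreg. induction l as [|a l IH]; intros z w Hin Hle.
  - destruct (classic (z = ⊥)) as [Hz|Hz]; [rewrite Hz; apply bot_le|].
    destruct (atomicS z Hz) as [b [Hb Hbz]]. destruct (Hin b Hb Hbz).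
  - destruct (classic (atom S a)) as [Ha|Ha].
    + assert (Hsplit : z = z ⊓ a ⊔ z ⊓ ¬ a).
      { now rewrite <- inf_sup_distr, complemented_of_regular, inf_top by auto. }
      rewrite Hsplit. apply sup_le.
      * destruct (atom_le_or_disjoint a z Ha) as [Haz|Hdisj].
        -- apply (le_trans _ a); [apply inf_le_r|]. now apply Hle.
        -- rewrite inf_comm, Hdisj. apply bot_le.
      * assert (Hbelow : forall b, b ⊑ z ⊓ ¬ a -> b ⊑ z)
          by (intros b Hb; exact (le_trans _ _ _ Hb (inf_le_l _ _))).
        apply IH; [|intros b Hb Hbz; now apply Hle, Hbelow].
        intros b Hb Hbz.
        destruct (Hin b Hb (Hbelow b Hbz)) as [E|Hbl]; [subst b|exact Hbl].
        exfalso. apply (atom_neq_bot a Hb), le_bot.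
        rewrite <- (inf_pc a). apply le_inf; [apply le_refl|].
        exact (le_trans _ _ _ Hbz (inf_le_r _ _)).
    + apply IH; [|exact Hle]. intros b Hb Hbz.
      destruct (Hin b Hb Hbz) as [E|Hbl]; [subst b; contradiction|exact Hbl].
Qed.

End Atomic.

End StoneRelationAlgebra.

Theorem mainTheorem6 (S : StoneRA) :
  atomic S -> atom_rectangular S -> simple_alg S -> finitely_many_atoms S ->
  forall x : S, pc S (pc S x) = x.
Proof.
  intros Hatomic Hrect Hsimple [l Hl] x.
  apply regular_of_complemented, le_antisym; [apply le_top|].
  apply (le_of_atoms_le Hatomic l (fun a => atom_regular Hatomic Hrect a Hsimple)).
  - intros b Hb _. now apply Hl.
  - intros b Hb _. destruct (atom_le_or_disjoint b x Hb) as [Hbx|Hdisj].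
    + exact (le_trans _ _ _ Hbx (le_sup_l _ _)).
    + exact (le_trans _ _ _ (le_pc _ _ Hdisj) (le_sup_r _ _)).
Qed.
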